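(* Consider optimal control problem OCP-1 (described in the context), let $u_*^1$ be an optimal control with optimal trajectory $(s_*^1,e_*^1,i_*^1,j_*^1)$ and let $\psi_*=(\psi_1^*,\dots,\psi_4^* )$ be the corresponding adjoint function from the Pontryagin maximum principle. Then at every $t\in[0,T]$ at which $u_*^1(t)$ maximizes the Hamiltonian $H(s_*^1(t),e_*^1(t),i_*^1(t),j_*^1(t),\psi_*(t),u)$ over $u\in[0,u_{\max}]$: if $A_*(t)>0$, then $u_*^1(t)=u_{\max}$ when $\lambda_*^1(t)>u_{\max}$, $u_*^1(t)=\lambda_*^1(t)$ when $0\le\lambda_*^1(t)\le u_{\max}$, and $u_*^1(t)=0$ when $\lambda_*^1(t)\le 0$; and if $A_*(t)\le0$, then $u_*^1(t)=0$.
   Context: Parameters: $\beta_1,\beta_2,\gamma,\rho_1,\rho_2>0$; $\sigma_1,\sigma_2>0$ with $\sigma_1+\sigma_2=1$; $0\le u_{\max}<1$; weights $\alpha_1,\alpha_2\ge0$, $\alpha_3>0$; horizon $T>0$; initial values $s_0,e_0,i_0,j_0>0$ with $s_0+e_0+i_0+j_0\le 1$. The admissible controls are all Lebesgue measurable $u:[0,T]\to[0,u_{\max}]$. The state system is $s'=-s(\beta_1(1-u)^2i+\beta_2(1-u)j)$, $e'=s(\beta_1(1-u)^2i+\beta_2(1-u)j)-\gamma e$, $i'=\sigma_1\gamma e-\rho_1 i$, $j'=\sigma_2\gamma e-\rho_2 j$, with $s(0)=s_0,e(0)=e_0,i(0)=i_0,j(0)=j_0$. OCP-1 is the problem of minimizing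 $Q(u)=\alpha_1(e(T)+i(T)+j(T))+\alpha_2\int_0^T(e+i+j)\,dt+0.5\alpha_3\int_0^Tu^2\,dt$ over admissible controls. Its Hamiltonian is $H(s,e,i,j,\psi_1,\dots,\psi_4,u)=-s(\beta_1(1-u)^2i+\beta_2(1-u)j)(\psi_1-\psi_2)-\gamma e(\psi_2-\sigma_1\psi_3-\sigma_2\psi_4)-\rho_1 i\psi_3-\rho_2 j\psi_4-\alpha_2(e+i+j)-0.5\alpha_3u^2$. The adjoint function $\psi_*$ is a nontrivial solution of $\psi_1'=(\beta_1(1-u_*^1)^2i_*^1+\beta_2(1-u_*^1)j_*^1)(\psi_1-\psi_2)$, $\psi_2'=\gamma(\psi_2-\sigma_1\psi_3-\sigma_2\psi_4)+\alpha_2$, $\psi_3'=\beta_1(1-u_*^1)^2s_*^1(\psi_1-\psi_2)+\rho_1\psi_3+\alpha_2$, $\psi_4'=\beta_2(1-u_*^1)s_*^1(\psi_1-\psi_2)+\rho_2\psi_4+\alpha_2$, with $\psi_1(T)=0$, $\psi_2(T)=\psi_3(T)=\psi_4(T)=-\alpha_1$, and $u_*^1(t)$ maximizes the Hamiltonian along the optimal trajectory for almost all $t\in[0,T]$. Define $A_*(t)=\beta_1s_*^1(t)i_*^1(t)(\psi_1^*(t)-\psi_2^*(t))+0.5\alpha_3$, $B_*(t)=s_*^1(t)(2\beta_1i_*^1(t)+\beta_2j_*^1(t))(\psi_1^*(t)-\psi_2^*(t))$, and, whenever $A_*(t)\neq0$, the indicator function $\lambda_*^1(t)=0.5B_*(t)/A_*(t)$.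 *)

From HB Require Import structures.
From mathcomp Require Import all_boot all_order all_algebra.
From mathcomp Require Import all_classical all_reals all_analysis.
Set Implicit Arguments. Unset Strict Implicit. Unset Printing Implicit Defensive.
Import Order.TTheory GRing.Theory Num.Theory.
Local Open Scope classical_set_scope.
Local Open Scope ring_scope.

Section OCP.
Variable R : realType.
Local Notation mu := (@lebesgue_measure R).

(* x is a Caratheodory (absolutely continuous, integral-form) solution on [0,T]
   of x' = f with x(0) = x0. *)
Definition fwd_sol (T x0 : R) (x f : R -> R) : Prop :=
  mu.-integrable `[0, T] (EFin \o f) /\
  forall t, 0 <= t <= T ->
    (x t)%:E = (x0%:E + \int[mu]_(r in `[0%R, t]%classic) (f r)%:E)%E.

Definition bwd_sol (T xT : R) (x f : R -> R) : Prop :=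
  mu.-integrable `[0, T] (EFin \o f) /\
  forall t, 0 <= t <= T ->
    (x t)%:E = (xT%:E - \int[mu]_(r in `[t, T]%classic) (f r)%:E)%E.

Definition admissible (T umax : R) (u : R -> R) : Prop :=
  measurable_fun `[0, T] u /\ forall t, 0 <= t <= T -> 0 <= u t <= umax.

Definition incid (b1 b2 : R) (u s i j : R -> R) (t : R) : R :=
  s t * (b1 * (1 - u t) ^+ 2 * i t + b2 * (1 - u t) * j t).

Definition state_sol (b1 b2 g r1 r2 sg1 sg2 T s0 e0 i0 j0 : R)
    (u s e i j : R -> R) : Prop :=
  [/\ fwd_sol T s0 s (fun t => - incid b1 b2 u s i j t),
      fwd_sol T e0 e (fun t => incid b1 b2 u s i j t - g * e t),
      fwd_sol T i0 i (fun t => sg1 * g * e t - r1 * i t) &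
      fwd_sol T j0 j (fun t => sg2 * g * e t - r2 * j t)].

Definition Qcost (a1 a2 a3 T : R) (u e i j : R -> R) : \bar R :=
  ((a1 * (e T + i T + j T))%:E
   + a2%:E * \int[mu]_(t in `[0%R, T]%classic) (e t + i t + j t)%:E
   + (2^-1 * a3)%:E * \int[mu]_(t in `[0%R, T]%classic) (u t ^+ 2)%:E)%E.

Definition Ham (b1 b2 g r1 r2 sg1 sg2 a2 a3 : R)
    (s e i j p1 p2 p3 p4 u : R) : R :=
  - s * (b1 * (1 - u) ^+ 2 * i + b2 * (1 - u) * j) * (p1 - p2)
  - g * e * (p2 - sg1 * p3 - sg2 * p4) - r1 * i * p3 - r2 * j * p4
  - a2 * (e + i + j) - 2^-1 * a3 * u ^+ 2.

Definition adjoint_sol (b1 b2 g r1 r2 sg1 sg2 a1 a2 T : R)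
    (u s i j p1 p2 p3 p4 : R -> R) : Prop :=
  [/\ bwd_sol T 0 p1 (fun t =>
        (b1 * (1 - u t) ^+ 2 * i t + b2 * (1 - u t) * j t) * (p1 t - p2 t)),
      bwd_sol T (- a1) p2 (fun t =>
        g * (p2 t - sg1 * p3 t - sg2 * p4 t) + a2),
      bwd_sol T (- a1) p3 (fun t =>
        b1 * (1 - u t) ^+ 2 * s t * (p1 t - p2 t) + r1 * p3 t + a2) &
      bwd_sol T (- a1) p4 (fun t =>
        b2 * (1 - u t) * s t * (p1 t - p2 t) + r2 * p4 t + a2)].

Definition maximizes_H (b1 b2 g r1 r2 sg1 sg2 a2 a3 umax : R)
    (s e i j p1 p2 p3 p4 v : R) : Prop :=
  0 <= v <= umax /\
  forall w, 0 <= w <= umax ->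
    Ham b1 b2 g r1 r2 sg1 sg2 a2 a3 s e i j p1 p2 p3 p4 w
    <= Ham b1 b2 g r1 r2 sg1 sg2 a2 a3 s e i j p1 p2 p3 p4 v.

Definition Astar (b1 a3 s i p1 p2 : R) : R := b1 * s * i * (p1 - p2) + 2^-1 * a3.
Definition Bstar (b1 b2 s i j p1 p2 : R) : R :=
  s * (2 * b1 * i + b2 * j) * (p1 - p2).
(* indicator function lambda (meaningful when A <> 0) *)
Definition lambda_star (b1 b2 a3 s i j p1 p2 : R) : R :=
  2^-1 * Bstar b1 b2 s i j p1 p2 / Astar b1 a3 s i p1 p2.

End OCP.

(* As a function of the control, the Hamiltonian is B u - A u^2 plus terms
   not depending on u. If A > 0 its maximiser over [0, umax] is therefore the
   projection of B / (2 A) = lambda onto that interval. If A <= 0 then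
   b1 s i (psi1 - psi2) < 0; since the state is positive along the trajectory,
   this makes s (psi1 - psi2) < 0 and hence B <= 0, and then u = 0 is the only
   maximiser because umax < 2.
   Positivity of the state is proved by real induction on [0, T]: if a component
   x first reaches 0 at tau > 0, then x' >= -K x on [0, tau], and integrating
   from the point where x is largest on [tau - 1/(2K), tau] shows that this
   maximum is at most half of itself, contradicting x > 0 before tau. *)
From HB Require Import structures.
From mathcomp Require Import all_boot all_order all_algebra.
From mathcomp Require Import all_classical all_reals all_analysis.
From mathcomp Require Import ring lra.
Import Order.TTheory GRing.Theory Num.Theory numFieldNormedType.Exports.
Set Implicit Arguments.
Unset Strict Implicit.
Local Open Scope classical_set_scope.
Local Open Scope ring_scope.

Section RealInterval.
Variable R : realType.

Lemma real_induction (a b : R) (P : R -> Prop) :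
  (forall tau, a <= tau <= b -> (forall r, a <= r < tau -> P r) -> P tau) ->
  (forall tau, a <= tau <= b -> P tau ->
    exists2 d, 0 < d & forall r, a <= r <= b -> `|r - tau| < d -> P r) ->
  forall t, a <= t <= b -> P t.
Proof.
move=> P_closed P_open t t_ab; apply: contrapT => nPt.
pose Z := [set r | a <= r <= b /\ ~ P r].
have Zt : Z t by [].
have Z_lb : lbound Z a by move=> r [/andP[]].
have Z_inf : has_inf Z by split; [exists t | exists a].
pose tau := inf Z.
have a_tau : a <= tau by apply: lb_le_inf => //; exists t.
have tau_b : tau <= b by apply: le_trans (ge_inf Z_inf.2 Zt) _; case/andP: t_ab.
have tau_ab : a <= tau <= b by rewrite a_tau tau_b.
have P_below : forall r, a <= r < tau -> P r.
  move=> r /andP[a_r r_tau]; apply: contrapT => nPr.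
  have Zr : Z r by split; rewrite // a_r (le_trans (ltW r_tau) tau_b).
  by have := ge_inf Z_inf.2 Zr; rewrite leNgt r_tau.
have [d d_gt0 Pd] := P_open tau tau_ab (P_closed tau tau_ab P_below).
have [z [z_ab nPz] z_lt] := inf_adherent d_gt0 Z_inf.
have tau_z : tau <= z := ge_inf Z_inf.2 (conj z_ab nPz).
by apply/nPz/Pd; rewrite // ger0_norm ?subr_ge0 // ltrBlDl.
Qed.

Lemma continuous_within_itv_ball (h : R -> R) (a b tau : R) (P : set R) :
  {within `[a, b], continuous h} -> a <= tau <= b -> open P -> P (h tau) ->
  exists2 d, 0 < d & forall r, a <= r <= b -> `|r - tau| < d -> P (h r).
Proof.
move=> h_cont tau_ab oP Ph.
have tau_in : `[a, b]%classic tau by rewrite /= in_itv.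
have hP := h_cont tau P (open_nbhs_nbhs (conj oP Ph)).
have : within `[a, b] (nbhs tau) (fun r => P (h r)) by rewrite nbhs_subspace_in.
move=> /nbhs_ballP[d /= d_gt0 hd].
exists d => // r r_ab rd; apply: hd; last by rewrite /= in_itv.
by rewrite /ball /= distrC.
Qed.

Lemma continuous_within_itv_ge0 (h : R -> R) (a b tau : R) :
  {within `[a, b], continuous h} -> a < tau <= b ->
  (forall r, a <= r < tau -> 0 < h r) -> 0 <= h tau.
Proof.
move=> h_cont /andP[a_tau tau_b] h_gt0; rewrite leNgt; apply/negP => h_lt0.
have tau_ab : a <= tau <= b by rewrite (ltW a_tau) tau_b.
have [d d_gt0 hd] := continuous_within_itv_ball h_cont tau_ab (@open_lt _ 0) h_lt0.
pose r := Num.max a (tau - d / 2).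
have a_r : a <= r by rewrite le_max lexx.
have r_tau : r < tau by rewrite gt_max a_tau ltrBlDr ltrDl divr_gt0.
have r_close : `|r - tau| < d.
  rewrite ler0_norm ?subr_le0 ?(ltW r_tau) // opprB.
  have : tau - d / 2 <= r by rewrite le_max lexx orbT.
  lra.
have : h r < 0 by apply: hd; rewrite // a_r (le_trans (ltW r_tau) tau_b).
by rewrite ltNge ltW // h_gt0 // a_r.
Qed.

End RealInterval.

Section CaratheodorySolution.
Variable R : realType.
Local Notation mu := (@lebesgue_measure R).
Variables (T x0 : R) (x f : R -> R).
Hypotheses (T_ge0 : 0 <= T) (x_sol : fwd_sol T x0 x f).

Lemma fwd_sol_val t : 0 <= t <= T -> x t = x0 + \int[mu]_(r in `[0, t]) f r.
Proof.
case: x_sol => f_int x_eq /[dup] /x_eq + /andP[t_ge0 t_le].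
have f_int_t : mu.-integrable `[0, t] (EFin \o f).
  by apply: integrableS f_int => //; apply: subset_itvl; rewrite bnd_simp.
by rewrite /Rintegral -(fineK (integrable_fin_num _ f_int_t)) // -EFinD => -[].
Qed.

Lemma fwd_sol_at0 : x 0 = x0.
Proof.
by rewrite fwd_sol_val ?lexx ?T_ge0 // set_itv1 Rintegral_set1 addr0.
Qed.

Lemma fwd_sol_continuous : {within `[0, T], continuous x}.
Proof.
apply: (@subspace_eq_continuous _ `[0, T] _
  (fun r => x0 + parameterized_integral mu 0 r f)).
  move=> r; rewrite inE /= in_itv /= => r_in.
  by rewrite /from_subspace fwd_sol_val.
move=> r; apply: cvgD; first exact: cvg_cst.
exact: parameterized_integral_continuous T_ge0 x_sol.1 r.
Qed.

Lemma fwd_sol_ub : exists C, forall r, 0 <= r <= T -> x r <= C.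
Proof.
have [c _ x_le] := EVT_max T_ge0 fwd_sol_continuous.
by exists (x c) => r r_in; apply: x_le; rewrite in_itv.
Qed.

Lemma fwd_sol_incr_ge (a b c : R) : 0 <= a -> a <= b -> b <= T ->
  (forall r, a <= r <= b -> c <= f r) -> c * (b - a) <= x b - x a.
Proof.
move=> a_ge0 a_b b_T c_le.
have b_ge0 := le_trans a_ge0 a_b.
rewrite !fwd_sol_val ?a_ge0 ?b_ge0 ?b_T ?(le_trans a_b b_T) //.
rewrite opprD addrA (addrC x0) addrK.
have f_int_b : mu.-integrable `[0, b] (EFin \o f).
  by apply: integrableS x_sol.1 => //; apply: subset_itvl; rewrite bnd_simp.
rewrite (@Rintegral_itvB _ f (BLeft 0) (BRight b) a) ?bnd_simp //.
have sub_ab : `]a, b] `<=` `[a, b].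
  by apply: subset_itvr; rewrite bnd_simp.
have f_int_ab : mu.-integrable `]a, b] (EFin \o f).
  apply: integrableS f_int_b => //; apply: subset_trans sub_ab _.
  by apply: subset_itv; rewrite bnd_simp.
have c_int_ab : mu.-integrable `]a, b] (EFin \o cst c).
  have : mu.-integrable `[a, b] (EFin \o cst c).
    apply: continuous_compact_integrable; first exact: segment_compact.
    by apply: continuous_subspaceT => ?; exact: cst_continuous.
  exact: integrableS.
apply: le_trans (le_Rintegral _ c_int_ab f_int_ab _) => //.
  have mu_ab : mu `]a, b] = (b - a)%:E.
    rewrite lebesgue_measure_itv /= lte_fin; case: ltP => [//|b_le_a].
    have -> : b = a by apply/eqP; rewrite eq_le b_le_a a_b.
    by rewrite subrr.
  by rewrite Rintegral_cst //; move: mu_ab => /= ->.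
by move=> r; rewrite /= in_itv /= => /andP[/ltW a_r r_b]; apply: c_le; rewrite a_r.
Qed.

Lemma fwd_sol_gt0_at (tau K : R) : 0 < tau <= T -> 0 < K ->
  (forall r, 0 <= r < tau -> 0 < x r) -> 0 <= x tau ->
  (forall r, 0 <= r <= tau -> - K * x r <= f r) -> 0 < x tau.
Proof.
move=> /andP[tau_gt0 tau_T] K_gt0 x_gt0 x_tau_ge0 f_ge.
rewrite lt_neqAle x_tau_ge0 andbT; apply/negP => /eqP x_tau0.
pose a := Num.max 0 (tau - (2 * K)^-1).
have a_ge0 : 0 <= a by rewrite le_max lexx.
have a_lt : a < tau by rewrite gt_max tau_gt0 ltrBlDr ltrDl invr_gt0 mulr_gt0.
have tau_a : tau - a <= (2 * K)^-1.
  have : tau - (2 * K)^-1 <= a by rewrite le_max lexx orbT.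
  lra.
have x_cont_a : {within `[a, tau], continuous x}.
  apply: continuous_subspaceW fwd_sol_continuous.
  by apply: subset_itv; rewrite bnd_simp.
have [c /[!in_itv] /= /andP[a_c c_tau] x_le] := EVT_max (ltW a_lt) x_cont_a.
have M_gt0 : 0 < x c.
  apply: lt_le_trans (x_gt0 a _) (x_le a _); first by rewrite a_ge0.
  by rewrite in_itv /= lexx ltW.
have := @fwd_sol_incr_ge c tau (- K * x c) (le_trans a_ge0 a_c) c_tau tau_T.
have {}f_ge r : c <= r <= tau -> - K * x c <= f r.
  move=> /andP[c_r r_tau]; apply: le_trans (f_ge r _).
    by rewrite !mulNr lerN2 ler_pM2l // x_le // in_itv /= (le_trans a_c c_r).
  by rewrite (le_trans (le_trans a_ge0 a_c) c_r).
move=> /(_ f_ge); rewrite -x_tau0 sub0r => M_le.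
have : K * x c * (tau - c) <= K * x c * (2 * K)^-1.
  by rewrite ler_pM2l ?mulr_gt0 //; lra.
have -> : K * x c * (2 * K)^-1 = x c / 2 by field; rewrite gt_eqF.
lra.
Qed.

Lemma fwd_sol_ge0_at (tau : R) : 0 < tau <= T ->
  (forall r, 0 <= r < tau -> 0 < x r) -> 0 <= x tau.
Proof. exact: continuous_within_itv_ge0 fwd_sol_continuous. Qed.

Lemma fwd_sol_gt0_near (tau : R) : 0 <= tau <= T -> 0 < x tau ->
  exists2 d, 0 < d & forall r, 0 <= r <= T -> `|r - tau| < d -> 0 < x r.
Proof.
move=> tau_in.
by apply: (continuous_within_itv_ball fwd_sol_continuous tau_in (@open_gt _ 0)).
Qed.

End CaratheodorySolution.

Section StatePositivity.
Variable R : realType.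

Lemma state_rhs_ge (b1 b2 g r1 r2 sg1 sg2 v S E I J CI CJ : R) :
  0 <= b1 -> 0 <= b2 -> 0 <= g -> 0 <= r1 -> 0 <= r2 -> 0 <= sg1 -> 0 <= sg2 ->
  0 <= v <= 1 -> 0 <= S -> 0 <= E -> 0 <= I <= CI -> 0 <= J <= CJ ->
  let K := b1 * CI + b2 * CJ + g + r1 + r2 in
  let inc := S * (b1 * (1 - v) ^+ 2 * I + b2 * (1 - v) * J) in
  [/\ - K * S <= - inc, - K * E <= inc - g * E,
      - K * I <= sg1 * g * E - r1 * I & - K * J <= sg2 * g * E - r2 * J].
Proof.
move=> b1_ge0 b2_ge0 g_ge0 r1_ge0 r2_ge0 sg1_ge0 sg2_ge0 /andP[v_ge0 v_le1]
  S_ge0 E_ge0 /andP[I_ge0 I_le] /andP[J_ge0 J_le] K inc.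
have w2_le1 : (1 - v) ^+ 2 <= 1 by rewrite expr_le1 //; lra.
have rate_le : b1 * (1 - v) ^+ 2 * I + b2 * (1 - v) * J <= b1 * CI + b2 * CJ.
  have I_part : (1 - v) ^+ 2 * I <= CI := le_trans (ler_piMl I_ge0 w2_le1) I_le.
  have J_part : (1 - v) * J <= CJ by apply: le_trans (ler_piMl J_ge0 _) J_le; lra.
  by rewrite lerD // -mulrA ler_wpM2l.
have inc_ge0 : 0 <= inc.
  by rewrite mulr_ge0 // addr_ge0 // !mulr_ge0 // ?sqr_ge0 //; lra.
have CI_ge0 : 0 <= b1 * CI by rewrite mulr_ge0 ?(le_trans I_ge0 I_le).
have CJ_ge0 : 0 <= b2 * CJ by rewrite mulr_ge0 ?(le_trans J_ge0 J_le).
have sgE_ge0 : 0 <= sg1 * g * E /\ 0 <= sg2 * g * E by rewrite !mulr_ge0.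
rewrite /K; split.
- have : inc <= (b1 * CI + b2 * CJ) * S by rewrite /inc mulrC ler_wpM2r.
  have : 0 <= (g + r1 + r2) * S by rewrite mulr_ge0 //; lra.
  lra.
- have : 0 <= (b1 * CI + b2 * CJ + r1 + r2) * E by rewrite mulr_ge0 //; lra.
  lra.
- have : 0 <= (b1 * CI + b2 * CJ + g + r2) * I by rewrite mulr_ge0 //; lra.
  lra.
- have : 0 <= (b1 * CI + b2 * CJ + g + r1) * J by rewrite mulr_ge0 //; lra.
  lra.
Qed.

Variables (b1 b2 g r1 r2 sg1 sg2 T s0 e0 i0 j0 umax : R) (u s e i j : R -> R).
Hypotheses (b1_gt0 : 0 < b1) (b2_gt0 : 0 < b2) (g_gt0 : 0 < g)
  (r1_gt0 : 0 < r1) (r2_gt0 : 0 < r2) (sg1_gt0 : 0 < sg1) (sg2_gt0 : 0 < sg2)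
  (umax_le1 : umax <= 1) (T_ge0 : 0 <= T)
  (s0_gt0 : 0 < s0) (e0_gt0 : 0 < e0) (i0_gt0 : 0 < i0) (j0_gt0 : 0 < j0)
  (u_adm : admissible T umax u)
  (seij_sol : state_sol b1 b2 g r1 r2 sg1 sg2 T s0 e0 i0 j0 u s e i j).

Lemma state_sol_gt0_at tau : 0 < tau <= T ->
  (forall r, 0 <= r < tau -> [/\ 0 < s r, 0 < e r, 0 < i r & 0 < j r]) ->
  [/\ 0 < s tau, 0 < e tau, 0 < i tau & 0 < j tau].
Proof.
move=> /[dup] tau_in /andP[tau_gt0 tau_T] pos_before.
have [s_sol e_sol i_sol j_sol] := seij_sol.
have [s_pos e_pos i_pos j_pos] : [/\ forall r, 0 <= r < tau -> 0 < s r,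
    forall r, 0 <= r < tau -> 0 < e r, forall r, 0 <= r < tau -> 0 < i r &
    forall r, 0 <= r < tau -> 0 < j r] by split=> r /pos_before[].
have state_ge0 r : 0 <= r <= tau -> [/\ 0 <= s r, 0 <= e r, 0 <= i r & 0 <= j r].
  move=> /andP[r_ge0]; rewrite le_eqVlt => /orP[/eqP->|r_lt].
    by split; [exact: (fwd_sol_ge0_at T_ge0 s_sol tau_in s_pos)|
               exact: (fwd_sol_ge0_at T_ge0 e_sol tau_in e_pos)|
               exact: (fwd_sol_ge0_at T_ge0 i_sol tau_in i_pos)|
               exact: (fwd_sol_ge0_at T_ge0 j_sol tau_in j_pos)].
  by have [] := pos_before r; rewrite ?r_ge0 // => *; split; exact: ltW.
have [CI CI_ub] := fwd_sol_ub T_ge0 i_sol.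
have [CJ CJ_ub] := fwd_sol_ub T_ge0 j_sol.
have CI_gt0 : 0 < CI.
  by rewrite (lt_le_trans i0_gt0) // -(fwd_sol_at0 T_ge0 i_sol) CI_ub // lexx.
have CJ_gt0 : 0 < CJ.
  by rewrite (lt_le_trans j0_gt0) // -(fwd_sol_at0 T_ge0 j_sol) CJ_ub // lexx.
pose K := b1 * CI + b2 * CJ + g + r1 + r2.
have K_gt0 : 0 < K by rewrite /K !addr_gt0 // mulr_gt0.
have rhs_ge r : 0 <= r <= tau ->
    [/\ - K * s r <= - incid b1 b2 u s i j r,
        - K * e r <= incid b1 b2 u s i j r - g * e r,
        - K * i r <= sg1 * g * e r - r1 * i r &
        - K * j r <= sg2 * g * e r - r2 * j r].
  move=> r_in; have [s_ge0 e_ge0 i_ge0 j_ge0] := state_ge0 r r_in.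
  have r_T : 0 <= r <= T by case/andP: r_in => -> /le_trans->.
  have /andP[u_ge0 u_le] := u_adm.2 r r_T.
  by apply: state_rhs_ge; rewrite ?i_ge0 ?j_ge0 ?CI_ub ?CJ_ub ?u_ge0
    ?(le_trans u_le) //; apply: ltW.
have tau_tau : 0 <= tau <= tau by rewrite (ltW tau_gt0) lexx.
have [s_ge0 e_ge0 i_ge0 j_ge0] := state_ge0 tau tau_tau.
split.
- by apply: (fwd_sol_gt0_at T_ge0 s_sol tau_in K_gt0) => // r /rhs_ge[].
- by apply: (fwd_sol_gt0_at T_ge0 e_sol tau_in K_gt0) => // r /rhs_ge[].
- by apply: (fwd_sol_gt0_at T_ge0 i_sol tau_in K_gt0) => // r /rhs_ge[].
- by apply: (fwd_sol_gt0_at T_ge0 j_sol tau_in K_gt0) => // r /rhs_ge[].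
Qed.

Lemma state_sol_gt0 t : 0 <= t <= T ->
  [/\ 0 < s t, 0 < e t, 0 < i t & 0 < j t].
Proof.
have [s_sol e_sol i_sol j_sol] := seij_sol.
move: t; apply: real_induction => [tau /andP[tau_ge0 tau_T] pos_before|tau tau_in].
  have [->|tau_neq0] := eqVneq tau 0.
    by rewrite !(fwd_sol_at0 T_ge0 s_sol, fwd_sol_at0 T_ge0 e_sol,
                 fwd_sol_at0 T_ge0 i_sol, fwd_sol_at0 T_ge0 j_sol).
  by apply: state_sol_gt0_at; rewrite // lt_neqAle eq_sym tau_neq0 tau_ge0.
move=> [s_gt0 e_gt0 i_gt0 j_gt0].
have [ds ds_gt0 s_near] := fwd_sol_gt0_near T_ge0 s_sol tau_in s_gt0.
have [de de_gt0 e_near] := fwd_sol_gt0_near T_ge0 e_sol tau_in e_gt0.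
have [di di_gt0 i_near] := fwd_sol_gt0_near T_ge0 i_sol tau_in i_gt0.
have [dj dj_gt0 j_near] := fwd_sol_gt0_near T_ge0 j_sol tau_in j_gt0.
exists (Num.min (Num.min ds de) (Num.min di dj)).
  by rewrite !lt_min ds_gt0 de_gt0 di_gt0.
move=> r r_T; rewrite !lt_min => /andP[/andP[r_ds r_de] /andP[r_di r_dj]].
by split; [exact: s_near|exact: e_near|exact: i_near|exact: j_near].
Qed.

End StatePositivity.

Lemma argmax_quadratic_itv (R : realFieldType) (l m v : R) : 0 <= v <= m ->
  (forall w, 0 <= w <= m -> 2 * l * w - w ^+ 2 <= 2 * l * v - v ^+ 2) ->
  [/\ m < l -> v = m, 0 <= l <= m -> v = l & l <= 0 -> v = 0].
Proof.
move=> /andP[v_ge0 v_le] v_max; have m_ge0 := le_trans v_ge0 v_le.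
split.
- move=> m_lt; have := v_max m; rewrite m_ge0 lexx => /(_ isT) m_le.
  apply/eqP; rewrite eq_le v_le leNgt; apply/negP => v_lt; nra.
- move=> /andP[l_ge0 l_le]; have := v_max l; rewrite l_ge0 l_le => /(_ isT) l_le'.
  apply/eqP; rewrite eq_sym -subr_eq0 -sqrf_eq0 eq_le sqr_ge0 andbT; nra.
- move=> l_le0; have := v_max 0; rewrite lexx m_ge0 => /(_ isT) zero_le.
  apply/eqP; rewrite -sqrf_eq0 eq_le sqr_ge0 andbT; nra.
Qed.

Section HamiltonianMaximizer.
Variable R : realType.
Variables (b1 b2 g r1 r2 sg1 sg2 a2 a3 umax S E I J p1 p2 p3 p4 : R).
Local Notation H := (Ham b1 b2 g r1 r2 sg1 sg2 a2 a3 S E I J p1 p2 p3 p4).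
Local Notation A := (Astar b1 a3 S I p1 p2).
Local Notation B := (Bstar b1 b2 S I J p1 p2).

Lemma Ham_sub w v : H w - H v = B * (w - v) - A * (w ^+ 2 - v ^+ 2).
Proof. by rewrite /Ham /Bstar /Astar; ring. Qed.

Lemma maximizes_H_le v :
  maximizes_H b1 b2 g r1 r2 sg1 sg2 a2 a3 umax S E I J p1 p2 p3 p4 v ->
  forall w, 0 <= w <= umax -> B * (w - v) - A * (w ^+ 2 - v ^+ 2) <= 0.
Proof. by move=> [_ v_max] w w_in; rewrite -Ham_sub subr_le0 v_max. Qed.

Lemma maximizes_H_Astar_gt0 v :
  maximizes_H b1 b2 g r1 r2 sg1 sg2 a2 a3 umax S E I J p1 p2 p3 p4 v -> 0 < A ->
  let lam := lambda_star b1 b2 a3 S I J p1 p2 in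
  [/\ umax < lam -> v = umax, 0 <= lam <= umax -> v = lam & lam <= 0 -> v = 0].
Proof.
move=> v_maxH A_gt0 lam; apply: argmax_quadratic_itv; first exact: v_maxH.1.
move=> w w_in; have := maximizes_H_le v_maxH w_in.
have -> : B = 2 * A * lam by rewrite /lam /lambda_star; field; rewrite gt_eqF.
have -> : 2 * A * lam * (w - v) - A * (w ^+ 2 - v ^+ 2)
    = A * ((2 * lam * w - w ^+ 2) - (2 * lam * v - v ^+ 2)) by ring.
by rewrite pmulr_rle0 // subr_le0.
Qed.

Lemma maximizes_H_Astar_le0 v : 0 < b1 -> 0 <= b2 -> 0 < a3 -> umax < 2 ->
  0 < I -> 0 <= J ->
  maximizes_H b1 b2 g r1 r2 sg1 sg2 a2 a3 umax S E I J p1 p2 p3 p4 v -> A <= 0 ->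
  v = 0.
Proof.
move=> b1_gt0 b2_ge0 a3_gt0 umax_lt2 I_gt0 J_ge0 v_maxH A_le0.
have /andP[v_ge0 v_le] := v_maxH.1.
have := maximizes_H_le v_maxH (w := 0); rewrite lexx (le_trans v_ge0 v_le).
move=> /(_ isT); rewrite /Astar /Bstar in A_le0 *.
set SD := S * (p1 - p2).
have SD_lt0 : SD < 0.
  have : b1 * I * SD < 0 by rewrite /SD; nra.
  by rewrite pmulr_rlt0 // mulr_gt0.
apply: contraTeq => /lt_total; rewrite ltNge v_ge0 /= => v_gt0.
rewrite -ltNge (_ : _ - _ = v * (SD * (b1 * I * (v - 2) - b2 * J) + 2^-1 * a3 * v)).
  rewrite pmulr_rgt0 // ltr_wpDr ?mulr_ge0 // ?ltW // ?invr_gt0 //.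
  rewrite nmulr_rgt0 // subr_lt0 (lt_le_trans _ (mulr_ge0 b2_ge0 J_ge0)) //.
  by rewrite pmulr_rlt0 ?mulr_gt0 // subr_lt0 (le_lt_trans v_le).
by rewrite /SD; ring.
Qed.

End HamiltonianMaximizer.

Theorem corollary1 (R : realType)
  (b1 b2 g r1 r2 sg1 sg2 umax a1 a2 a3 T s0 e0 i0 j0 : R)
  (hb1 : 0 < b1) (hb2 : 0 < b2) (hg : 0 < g) (hr1 : 0 < r1) (hr2 : 0 < r2)
  (hsg1 : 0 < sg1) (hsg2 : 0 < sg2) (hsg : sg1 + sg2 = 1)
  (humax0 : 0 <= umax) (humax1 : umax < 1)
  (ha1 : 0 <= a1) (ha2 : 0 <= a2) (ha3 : 0 < a3) (hT : 0 < T)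
  (hs0 : 0 < s0) (he0 : 0 < e0) (hi0 : 0 < i0) (hj0 : 0 < j0)
  (hsum0 : s0 + e0 + i0 + j0 <= 1)
  (u s e i j p1 p2 p3 p4 : R -> R)
  (* u is an optimal control of OCP-1 with optimal trajectory (s,e,i,j) *)
  (hadm : admissible T umax u)
  (hstate : state_sol b1 b2 g r1 r2 sg1 sg2 T s0 e0 i0 j0 u s e i j)
  (hopt : forall (v sv ev iv jv : R -> R), admissible T umax v ->
      state_sol b1 b2 g r1 r2 sg1 sg2 T s0 e0 i0 j0 v sv ev iv jv ->
      (Qcost a1 a2 a3 T u e i j <= Qcost a1 a2 a3 T v ev iv jv)%E)
  (* psi = (p1,...,p4) is the adjoint function of the maximum principle *)
  (hadj : adjoint_sol b1 b2 g r1 r2 sg1 sg2 a1 a2 T u s i j p1 p2 p3 p4)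
  (hnontriv : exists t, 0 <= t <= T /\
      (p1 t != 0 \/ p2 t != 0 \/ p3 t != 0 \/ p4 t != 0))
  (hmaxae : {ae @lebesgue_measure R, forall t, 0 <= t <= T ->
      maximizes_H b1 b2 g r1 r2 sg1 sg2 a2 a3 umax
        (s t) (e t) (i t) (j t) (p1 t) (p2 t) (p3 t) (p4 t) (u t)})
  (t : R) (ht : 0 <= t <= T)
  (hmax : maximizes_H b1 b2 g r1 r2 sg1 sg2 a2 a3 umax
        (s t) (e t) (i t) (j t) (p1 t) (p2 t) (p3 t) (p4 t) (u t)) :
  let A := Astar b1 a3 (s t) (i t) (p1 t) (p2 t) in
  let lam := lambda_star b1 b2 a3 (s t) (i t) (j t) (p1 t) (p2 t) in
  (0 < A ->
     [/\ umax < lam -> u t = umax,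
         0 <= lam <= umax -> u t = lam &
         lam <= 0 -> u t = 0])
  /\ (A <= 0 -> u t = 0).
Proof.
move=> A lam.
have [_ _ i_gt0 j_gt0] := state_sol_gt0 hb1 hb2 hg hr1 hr2 hsg1 hsg2
  (ltW humax1) (ltW hT) hs0 he0 hi0 hj0 hadm hstate ht.
split; first exact: maximizes_H_Astar_gt0 hmax.
apply: maximizes_H_Astar_le0 hmax; rewrite ?ltW //; lra.
Qed.
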